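(* Consider an ergodic Jackson network process $\mathbf{X}$ (setting in the context) whose extended routing matrix $r$ is reversible (with respect to $\eta$), with stationary distribution $\xi(\mathbf{n})=\prod_{j=1}^{J}\prod_{k=1}^{n_j}\frac{\eta_j}{\mu_j(k)}C(j)^{-1}$. Let $\boldsymbol{\gamma}=(\gamma_j:j\in\overline{J})\in[0,1]^{\overline{J}}$, define $\boldsymbol{\alpha}=(\alpha_j:j\in\overline{J}_0)$ by $\alpha_0=1$, $\alpha_j=\gamma_j$ for $j\in\overline{J}$, and let $r^{(\boldsymbol{\alpha})}$ be the randomized-reflection modification of $r$: $r^{(\boldsymbol{\alpha})}(i,j)=r(i,j)\alpha_j$ for $i\neq j$, $r^{(\boldsymbol{\alpha})}(i,i)=1-\sum_{j\ne i}r(i,j)\alpha_j$. Let $\mathbf{X}^{(\boldsymbol{\gamma})}$ be the continuous-time Markov chain on $\mathbb{N}_0^{\overline{J}}$ whose positive transition rates are $q(\mathbf{n},\mathbf{n}+\mathbf{e}_i)=\lambda r^{(\boldsymbol{\alpha})}(0,i)$ for $i\in\overline{J}$, $q(\mathbf{n},\mathbf{n}-\mathbf{e}_j+\mathbf{e}_i)=1_{[n_j>0]}\gamma_j\mu_j(n_j)r^{(\boldsymbol{\alpha})}(j,i)$ for $i,j\in\overline{J}$, $i\ne j$, and $q(\mathbf{n},\mathbf{n}-\mathbf{e}_j)=1_{[n_j>0]}\gamma_j\mu_j(n_j)r^{(\boldsymbol{\alpha})}(j,0)$ for $j\in\overline{J}$. Let $B(\boldsymbol{\gamma})=\{j\in\overline{J}:\gamma_j=0\}$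 and $W(\boldsymbol{\gamma})=\overline{J}\setminus B(\boldsymbol{\gamma})$. Then $\xi$ is a stationary distribution of $\mathbf{X}^{(\boldsymbol{\gamma})}$. If $B(\boldsymbol{\gamma})=\emptyset$, then $\mathbf{X}^{(\boldsymbol{\gamma})}$ is ergodic. If $B(\boldsymbol{\gamma})\neq\emptyset$, then $\mathbf{X}^{(\boldsymbol{\gamma})}$ is not irreducible on $\mathbb{N}_0^{\overline{J}}$, its state space splits into the infinitely many closed subspaces $\mathbb{N}_0^{W(\boldsymbol{\gamma})}\times\{(n_j:j\in B(\boldsymbol{\gamma}))\}$, $(n_j:j\in B(\boldsymbol{\gamma}))\in\mathbb{N}_0^{B(\boldsymbol{\gamma})}$, and for every probability distribution $\varphi$ on $\mathbb{N}_0^{B(\boldsymbol{\gamma})}$ the distribution \[ \xi^{(\boldsymbol{\gamma})}_\varphi(\mathbf{n})=\prod_{j\in W(\boldsymbol{\gamma})}\prod_{k=1}^{n_j}\frac{\eta_j}{\mu_j(k)}C(j)^{-1}\cdot\varphi(n_j:j\in B(\boldsymbol{\gamma})),\qquad \mathbf{n}\in\mathbb{N}_0^{\overline{J}}, \] is a stationary distribution of $\mathbf{X}^{(\boldsymbol{\gamma})}$.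
   Context: Jackson network setting: node set $\overline{J}=\{1,\dots,J\}$, extended node set $\overline{J}_0=\{0,1,\dots,J\}$ (0 = external source/sink). External Poisson arrivals at node $j$ with rates $\lambda_j\ge0$, $\lambda=\sum_j\lambda_j>0$; single servers with infinite waiting room, FCFS, service intensity $\mu_j(n_j)>0$ when $n_j>0$ customers are at node $j$. Extended routing matrix $r=(r(i,j):i,j\in\overline{J}_0)$ is stochastic and irreducible with $r(0,j)=\lambda_j/\lambda$, $r(0,0)=0$. $\eta=(\eta_j:j\in\overline{J}_0)$ is the extended traffic solution: $\eta_0=\lambda$ and $\eta_j=\sum_{i\in\overline{J}_0}\eta_i r(i,j)$ for all $j\in\overline{J}_0$; reversibility of $r$ means $\eta_i r(i,j)=\eta_j r(j,i)$ for all $i,j$. The Jackson network process $\mathbf{X}$ is the Markov chain on $\mathbb{N}_0^{\overline{J}}$ with rates $q(\mathbf{n},\mathbf{n}+\mathbf{e}_i)=\lambda r(0,i)$, $q(\mathbf{n},\mathbf{n}-\mathbf{e}_j+\mathbf{e}_i)=1_{[n_j>0]}\mu_j(n_j)r(j,i)$ ($i\neq j$), $q(\mathbf{n},\mathbf{n}-\mathbf{e}_j)=1_{[n_j>0]}\mu_j(n_j)r(j,0)$; it is assumed ergodic, and $C(j)=\sum_{n\ge0}\prod_{k=1}^n\eta_j/\mu_j(k)<\infty$. $\mathbf{e}_j$ is the $j$-th unit vector. *)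

From HB Require Import structures.
From mathcomp Require Import all_boot all_order all_algebra.
From mathcomp Require Import all_classical all_reals all_analysis.
Set Implicit Arguments. Unset Strict Implicit. Unset Printing Implicit Defensive.
Import Order.TTheory GRing.Theory Num.Theory numFieldNormedType.Exports.
Local Open Scope ring_scope.
Local Open Scope classical_set_scope.

Section Jackson.
Variables (R : realType) (J : nat).

(* Extended node set \overline{J}_0 = 'I_J.+1 with 0 = ord0 the source/sink;
   node j of \overline{J} (encoded as j : 'I_J) is ext j = lift ord0 j. *)
Definition ext (j : 'I_J) : 'I_J.+1 := lift ord0 j.

Definition state := {ffun 'I_J -> nat}.

(* n + e_i and n - e_j (the latter only used when n_j > 0). *)
Definition up (n : state) (i : 'I_J) : state :=
  [ffun k => if k == i then (n k).+1 else n k].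
Definition down (n : state) (j : 'I_J) : state :=
  [ffun k => if k == j then (n k).-1 else n k].

Definition alpha (gamma : 'I_J -> R) (a : 'I_J.+1) : R :=
  if unlift ord0 a is Some j then gamma j else 1.

Definition ralpha (r : 'I_J.+1 -> 'I_J.+1 -> R) (gamma : 'I_J -> R)
    (a b : 'I_J.+1) : R :=
  if a == b then 1 - \sum_(c | c != a) r a c * alpha gamma c
  else r a b * alpha gamma b.

(* Transition rates q(n,m) of X^(gamma); lam = total external arrival rate.
   The Jackson network X itself is the case gamma = 1. *)
Definition rate (lam : R) (mu : 'I_J -> nat -> R) (r : 'I_J.+1 -> 'I_J.+1 -> R)
    (gamma : 'I_J -> R) (n m : state) : R :=
  \sum_(i : 'I_J) (if m == up n i then lam * ralpha r gamma ord0 (ext i) else 0)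
  + \sum_(j : 'I_J) \sum_(i : 'I_J | i != j)
      (if (0 < n j)%N && (m == up (down n j) i)
       then gamma j * mu j (n j) * ralpha r gamma (ext j) (ext i) else 0)
  + \sum_(j : 'I_J)
      (if (0 < n j)%N && (m == down n j)
       then gamma j * mu j (n j) * ralpha r gamma (ext j) ord0 else 0).

Definition stationary {S : choiceType} (q : S -> S -> R) (xi : S -> R) : Prop :=
  [/\ (forall n, 0 <= xi n),
      (\esum_(n in [set: S]) (xi n)%:E = 1)%E &
      forall n, (\esum_(m in [set m | m != n]) (xi m * q m n)%:E
                 = \esum_(m in [set m | m != n]) (xi n * q n m)%:E)%E].

Definition reachable {S : choiceType} (q : S -> S -> R) (n m : S) : Prop :=
  exists s : seq S, path (fun a b => 0 < q a b) n s && (last n s == m).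

Definition irreducible {S : choiceType} (q : S -> S -> R) : Prop :=
  forall n m, reachable q n m.

(* ergodic = irreducible and positive recurrent, read (as usual for
   regular queueing processes) as irreducible with a stationary distribution *)
Definition ergodic {S : choiceType} (q : S -> S -> R) : Prop :=
  irreducible q /\ exists xi, stationary q xi.

Definition pterm (eta : 'I_J.+1 -> R) (mu : 'I_J -> nat -> R) (j : 'I_J) (n : nat) : R :=
  \prod_(1 <= k < n.+1) (eta (ext j) / mu j k).

Definition Cnorm (eta : 'I_J.+1 -> R) (mu : 'I_J -> nat -> R) (j : 'I_J) : R :=
  limn (series (pterm eta mu j)).

Definition xi (eta : 'I_J.+1 -> R) (mu : 'I_J -> nat -> R) (n : state) : R :=
  \prod_(j : 'I_J) (pterm eta mu j (n j) / Cnorm eta mu j).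

Definition Bconf (gamma : 'I_J -> R) := {ffun {j : 'I_J | gamma j == 0} -> nat}.

Definition restrB (gamma : 'I_J -> R) (n : state) : Bconf gamma :=
  [ffun k => n (val k)].

Definition xi_phi (eta : 'I_J.+1 -> R) (mu : 'I_J -> nat -> R) (gamma : 'I_J -> R)
    (phi : Bconf gamma -> R) (n : state) : R :=
  (\prod_(j : 'I_J | gamma j != 0) (pterm eta mu j (n j) / Cnorm eta mu j))
  * phi (restrB gamma n).

End Jackson.

(* Every positive rate of X^(gamma) belongs to a pair of opposite transitions,
   n <-> n + e_j (exchange with the outside) or n <-> n - e_i + e_j (routing),
   and both rates of a pair are the corresponding rates of X multiplied by the
   same factor (gamma_j, resp. gamma_i gamma_j), because r^(alpha)(i,j) =
   r(i,j) gamma_j and node i serves at rate gamma_i mu_i.  Reversibility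
   eta_i r(i,j) = eta_j r(j,i) together with the recursion
   f_j(k+1) mu_j(k+1) = f_j(k) eta_j of the marginals
   f_j(k) = prod_(l <= k) (eta_j / mu_j(l)) / C(j) thus gives detailed balance
   for every product of the f_j(n_j) over the nodes with gamma_j <> 0 times a
   function of the coordinates with gamma_j = 0, which no transition changes.
   Both xi and xi_phi have this form; of the traffic equations only
   reversibility and eta_0 = lambda are needed.  If all gamma_j > 0, a positive
   rate of X shrinks at most by the factor (prod_j gamma_j)^2, so
   irreducibility carries over from X; if gamma_j = 0, coordinate j is frozen. *)

From Pilot Require Import Defs.
From mathcomp Require Import all_boot all_order all_algebra.
From mathcomp Require Import all_classical all_reals all_analysis.
From mathcomp Require Import ring lra.
Import Order.TTheory GRing.Theory Num.Theory numFieldNormedType.Exports.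
Local Open Scope ring_scope.
Local Open Scope classical_set_scope.

Section StateMoves.
Variable J : nat.
Implicit Types (n m : state J) (i j k : 'I_J).

Lemma upE n i k : up n i k = if k == i then (n k).+1 else n k.
Proof. by rewrite ffunE. Qed.

Lemma downE n i k : Defs.down n i k = if k == i then (n k).-1 else n k.
Proof. by rewrite ffunE. Qed.

Lemma up_downK {n i} : (0 < n i)%N -> up (Defs.down n i) i = n.
Proof.
by move=> ni; apply/ffunP => k; rewrite upE downE; case: eqP => [->|//]; rewrite prednK.
Qed.

Lemma down_upK n i : Defs.down (up n i) i = n.
Proof. by apply/ffunP => k; rewrite downE upE; case: eqP => [->|]. Qed.

Lemma eq_upE n m i : (n == up m i) = (0 < n i)%N && (m == Defs.down n i).
Proof.
apply/eqP/andP => [->|[ni /eqP ->]]; last by rewrite up_downK.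
by split; [rewrite upE eqxx | rewrite down_upK].
Qed.

Lemma eq_up_downE n m i j :
  (0 < m j)%N && (n == up (Defs.down m j) i) = (0 < n i)%N && (m == up (Defs.down n i) j).
Proof. by rewrite !eq_upE [Defs.down m j == _]eq_sym andbCA. Qed.

Lemma up_neq n i : up n i != n.
Proof. by apply/eqP => /ffunP /(_ i) /eqP; rewrite upE eqxx eqn_leq ltnn. Qed.

Lemma down_neq n i : (0 < n i)%N -> Defs.down n i != n.
Proof. by move=> ni; rewrite eq_sym -{1}(up_downK ni) up_neq. Qed.

Lemma up_down_neq n i j : j != i -> up (Defs.down n i) j != n.
Proof.
move=> ji; apply/eqP => /ffunP /(_ j) /eqP.
by rewrite upE downE eqxx (negPf ji) eqn_leq ltnn.
Qed.

End StateMoves.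

Section ReflectedRouting.
Variables (R : realType) (J : nat) (r : 'I_J.+1 -> 'I_J.+1 -> R) (gamma : 'I_J -> R).

Lemma alpha_ext i : alpha gamma (ext i) = gamma i.
Proof. by rewrite /alpha /ext liftK. Qed.

Lemma alpha_ord0 : alpha gamma ord0 = 1.
Proof. by rewrite /alpha unlift_none. Qed.

Lemma ralpha_source i : ralpha r gamma ord0 (ext i) = r ord0 (ext i) * gamma i.
Proof. by rewrite /ralpha (negPf (neq_lift _ _)) alpha_ext. Qed.

Lemma ralpha_ext j i : i != j -> ralpha r gamma (ext j) (ext i) = r (ext j) (ext i) * gamma i.
Proof. by move=> ij; rewrite /ralpha (inj_eq lift_inj) eq_sym (negPf ij) alpha_ext. Qed.

Lemma ralpha_sink j : ralpha r gamma (ext j) ord0 = r (ext j) ord0.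
Proof. by rewrite /ralpha eq_sym (negPf (neq_lift _ _)) alpha_ord0 mulr1. Qed.

End ReflectedRouting.

Lemma reversible_gt0 {R : realFieldType} {I : finType} {r : I -> I -> R} {eta : I -> R} {i0 : I} :
  (forall a b, 0 <= r a b) -> (forall a b, connect (fun a b => 0 < r a b) a b) ->
  (forall a b, eta a * r a b = eta b * r b a) -> 0 < eta i0 -> forall b, 0 < eta b.
Proof.
move=> r_ge0 conn rev eta_i0 b; have /connectP[p] := conn i0 b.
elim: p i0 eta_i0 => [|c p IH] a eta_a /=; first by move=> _ ->.
move=> /andP[rac pth] lst; apply: IH pth lst.
have : 0 < eta c * r c a by rewrite -rev mulr_gt0.
by have := r_ge0 c a; nra.
Qed.

Section PointMasses.
Variables (R : realType) (S : choiceType) (A : set S).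

Lemma pointmass_ge0 (b b' : bool) (c : R) : (b -> 0 <= c) -> 0 <= (if b && b' then c else 0).
Proof. by case: b => //= /(_ isT); case: b'. Qed.

Lemma esum_pointmass (t : S) (b : bool) (c : R) : (b -> 0 <= c) -> (b -> A t) ->
  (\esum_(m in A) (if b && (m == t) then c else 0)%:E = (if b then c else 0)%:E)%E.
Proof.
case: b => [/(_ isT) c_ge0 /(_ isT) At|_ _]; last by rewrite esum1.
rewrite (esumID [set t]); last by move=> m _; rewrite lee_fin pointmass_ge0.
rewrite setIidr ?sub1set ?inE // esum_set1 /= ?eqxx ?lee_fin //.
by rewrite esum1 ?adde0 // => m [_ /= /eqP /negPf ->].
Qed.

Lemma esum_sum_pointmass (I : choiceType) (s : seq I) (P : pred I)
    (b : I -> bool) (t : I -> S) (c : I -> R) :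
  (forall i, P i -> b i -> 0 <= c i) -> (forall i, P i -> b i -> A (t i)) ->
  (\esum_(m in A) (\sum_(i <- s | P i) (if b i && (m == t i) then c i else 0))%:E
   = (\sum_(i <- s | P i) (if b i then c i else 0))%:E)%E.
Proof.
move=> c_ge0 tA; rewrite -sumEFin; under eq_esum do rewrite -sumEFin.
rewrite esum_sum; last by move=> m i _ Pi; rewrite lee_fin; apply: pointmass_ge0; exact: c_ge0.
by apply: eq_bigr => i Pi; rewrite esum_pointmass // => [/c_ge0|/tA]; apply.
Qed.

Lemma esum_rate_pointmasses (I : finType)
    (b1 : I -> bool) (t1 : I -> S) (c1 : I -> R)
    (b2 : I -> I -> bool) (t2 : I -> I -> S) (c2 : I -> I -> R)
    (b3 : I -> bool) (t3 : I -> S) (c3 : I -> R) :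
  (forall i, b1 i -> 0 <= c1 i) -> (forall j i, b2 j i -> 0 <= c2 j i) ->
  (forall i, b3 i -> 0 <= c3 i) ->
  (forall i, b1 i -> A (t1 i)) -> (forall j i, i != j -> b2 j i -> A (t2 j i)) ->
  (forall i, b3 i -> A (t3 i)) ->
  (\esum_(m in A) (\sum_i (if b1 i && (m == t1 i) then c1 i else 0)
     + \sum_j \sum_(i | i != j) (if b2 j i && (m == t2 j i) then c2 j i else 0)
     + \sum_j (if b3 j && (m == t3 j) then c3 j else 0))%:E
  = (\sum_i (if b1 i then c1 i else 0)
     + \sum_j \sum_(i | i != j) (if b2 j i then c2 j i else 0)
     + \sum_j (if b3 j then c3 j else 0))%:E)%E.
Proof.
move=> c1_ge0 c2_ge0 c3_ge0 t1A t2A t3A.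
have S1_ge0 m : 0 <= \sum_i (if b1 i && (m == t1 i) then c1 i else 0).
  by apply: sumr_ge0 => i _; apply: pointmass_ge0; apply: c1_ge0.
have S2_ge0 m : 0 <= \sum_j \sum_(i | i != j) (if b2 j i && (m == t2 j i) then c2 j i else 0).
  by do 2 apply: sumr_ge0 => ? _; apply: pointmass_ge0; apply: c2_ge0.
have S3_ge0 m : 0 <= \sum_i (if b3 i && (m == t3 i) then c3 i else 0).
  by apply: sumr_ge0 => i _; apply: pointmass_ge0; apply: c3_ge0.
under eq_esum do rewrite !EFinD.
rewrite !esumD; try by move=> m _; rewrite ?lee_fin ?addr_ge0.
rewrite !EFinD; congr (_ + _ + _)%E.
- by apply: esum_sum_pointmass => i _; [exact: c1_ge0 | exact: t1A].
- rewrite -[in RHS]sumEFin; under eq_esum do rewrite -sumEFin.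
  rewrite esum_sum; last first.
    by move=> m j _ _; rewrite lee_fin sumr_ge0 // => i _; apply: pointmass_ge0; exact: c2_ge0.
  by apply: eq_bigr => j _; apply: esum_sum_pointmass => i ij; [exact: c2_ge0 | exact: t2A].
- by apply: esum_sum_pointmass => i _; [exact: c3_ge0 | exact: t3A].
Qed.

End PointMasses.

Lemma sum_offdiag_exchange (V : nmodType) (I : finType) (F : I -> I -> V) :
  \sum_j \sum_(i | i != j) F j i = \sum_i \sum_(j | j != i) F j i.
Proof.
under eq_bigr do rewrite big_mkcond.
rewrite exchange_big; apply: eq_bigr => i _; rewrite [RHS]big_mkcond.
by apply: eq_bigr => j _; rewrite eq_sym.
Qed.

Section ProductFormBalance.
Variables (R : realType) (J : nat) (lam : R) (r : 'I_J.+1 -> 'I_J.+1 -> R)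
  (eta : 'I_J.+1 -> R) (mu : 'I_J -> nat -> R) (gamma : 'I_J -> R)
  (a : 'I_J -> nat -> R) (h : state J -> R).
Hypothesis r_ge0 : forall a b, 0 <= r a b.
Hypothesis lam_ge0 : 0 <= lam.
Hypothesis eta_ord0 : eta ord0 = lam.
Hypothesis r_rev : forall a b, eta a * r a b = eta b * r b a.
Hypothesis mu_gt0 : forall j k, (0 < k)%N -> 0 < mu j k.
Hypothesis gamma_ge0 : forall j, 0 <= gamma j.
Hypothesis a_ge0 : forall j k, 0 <= a j k.
Hypothesis a_rec : forall j k, a j k.+1 * mu j k.+1 = a j k * eta (ext j).
Hypothesis h_ge0 : forall n : state J, 0 <= h n.
Hypothesis h_frozen : forall n m : state J, (forall j, gamma j == 0 -> m j = n j) -> h m = h n.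

Definition product_form (n : state J) := (\prod_(j | gamma j != 0) a j (n j)) * h n.
Local Notation p := product_form.
Implicit Types (n m : state J) (i j : 'I_J).

Lemma product_form_ge0 n : 0 <= p n.
Proof. by rewrite mulr_ge0 // prodr_ge0. Qed.

Lemma product_form_up n j : p (up n j) * gamma j * mu j (n j).+1 = p n * gamma j * eta (ext j).
Proof.
have [->|gj] := eqVneq (gamma j) 0; first by rewrite !mulr0 !mul0r.
rewrite /p (bigD1 j) //= [in RHS](bigD1 j) //= upE eqxx.
have -> : h (up n j) = h n.
  apply: h_frozen => k gk; rewrite upE; case: eqP => // kj.
  by rewrite kj (negPf gj) in gk.
rewrite (eq_bigr (fun k => a k (n k))) => [|k /andP[_ kj]]; last by rewrite upE (negPf kj).
set P := \prod_(i | _) _.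
transitivity (a j (n j).+1 * mu j (n j).+1 * (P * h n * gamma j)); first ring.
by rewrite a_rec; ring.
Qed.

Lemma product_form_down n i : (0 < n i)%N ->
  p n * gamma i * mu i (n i) = p (Defs.down n i) * gamma i * eta (ext i).
Proof. by move=> ni; rewrite -product_form_up up_downK // downE eqxx prednK. Qed.

Lemma product_form_flow_in n m : p m * rate lam mu r gamma m n =
  \sum_i (if (0 < n i)%N && (m == Defs.down n i)
          then p (Defs.down n i) * (lam * (r ord0 (ext i) * gamma i)) else 0)
  + \sum_j \sum_(i | i != j) (if (0 < n i)%N && (m == up (Defs.down n i) j)
          then p (up (Defs.down n i) j) * (gamma j * mu j (n j).+1 * (r (ext j) (ext i) * gamma i))
          else 0)
  + \sum_j (if true && (m == up n j)
          then p (up n j) * (gamma j * mu j (n j).+1 * r (ext j) ord0) else 0).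
Proof.
rewrite /rate !mulrDr !mulr_sumr; congr (_ + _ + _); apply: eq_bigr => j _.
- by rewrite eq_upE; case: andP => [[_ /eqP ->]|_]; rewrite ?ralpha_source ?mulr0.
- rewrite mulr_sumr; apply: eq_bigr => i ij.
  rewrite eq_up_downE; case: andP => [[_ /eqP ->]|_]; last by rewrite mulr0.
  by rewrite ralpha_ext // upE eqxx downE eq_sym (negPf ij).
- rewrite -eq_upE /=; case: eqP => [->|_]; last by rewrite mulr0.
  by rewrite ralpha_sink upE eqxx.
Qed.

Lemma product_form_flow_out n m : p n * rate lam mu r gamma n m =
  \sum_i (if true && (m == up n i) then p n * (lam * (r ord0 (ext i) * gamma i)) else 0)
  + \sum_j \sum_(i | i != j) (if (0 < n j)%N && (m == up (Defs.down n j) i)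
        then p n * (gamma j * mu j (n j) * (r (ext j) (ext i) * gamma i)) else 0)
  + \sum_j (if (0 < n j)%N && (m == Defs.down n j)
        then p n * (gamma j * mu j (n j) * r (ext j) ord0) else 0).
Proof.
rewrite /rate !mulrDr !mulr_sumr; congr (_ + _ + _); apply: eq_bigr => j _.
- by case: ifP; rewrite ?mulr0 // ralpha_source.
- rewrite mulr_sumr; apply: eq_bigr => i ij.
  by case: ifP; rewrite ?mulr0 // ralpha_ext.
- by case: ifP; rewrite ?mulr0 // ralpha_sink.
Qed.

Lemma balance_external_arrivals n :
  \sum_j p (up n j) * (gamma j * mu j (n j).+1 * r (ext j) ord0)
  = \sum_i p n * (lam * (r ord0 (ext i) * gamma i)).
Proof.
apply: eq_bigr => j _.
transitivity (p (up n j) * gamma j * mu j (n j).+1 * r (ext j) ord0); first ring.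
rewrite product_form_up.
transitivity (p n * gamma j * (eta (ext j) * r (ext j) ord0)); first ring.
by rewrite -r_rev eta_ord0; ring.
Qed.

Lemma balance_external_departures n :
  \sum_i (if (0 < n i)%N then p (Defs.down n i) * (lam * (r ord0 (ext i) * gamma i)) else 0)
  = \sum_j (if (0 < n j)%N then p n * (gamma j * mu j (n j) * r (ext j) ord0) else 0).
Proof.
apply: eq_bigr => i _; case: ifP => // ni.
transitivity (p n * gamma i * mu i (n i) * r (ext i) ord0); last ring.
rewrite product_form_down //.
transitivity (p (Defs.down n i) * gamma i * (eta (ext i) * r (ext i) ord0)); last ring.
by rewrite -r_rev eta_ord0; ring.
Qed.

Lemma balance_internal_routing n :
  \sum_j \sum_(i | i != j) (if (0 < n i)%N
      then p (up (Defs.down n i) j) * (gamma j * mu j (n j).+1 * (r (ext j) (ext i) * gamma i))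
      else 0)
  = \sum_j \sum_(i | i != j) (if (0 < n j)%N
      then p n * (gamma j * mu j (n j) * (r (ext j) (ext i) * gamma i)) else 0).
Proof.
transitivity (\sum_j \sum_(i | i != j) (if (0 < n i)%N then
    p (Defs.down n i) * gamma j * (eta (ext j) * r (ext j) (ext i)) * gamma i else 0)).
  apply: eq_bigr => j _; apply: eq_bigr => i ij; case: ifP => // ni.
  have nj : Defs.down n i j = n j by rewrite downE eq_sym (negPf ij).
  transitivity (p (up (Defs.down n i) j) * gamma j * mu j (Defs.down n i j).+1
    * r (ext j) (ext i) * gamma i); first by rewrite nj; ring.
  by rewrite product_form_up; ring.
rewrite sum_offdiag_exchange; apply: eq_bigr => i _; apply: eq_bigr => j ji.
case: ifP => // ni.
transitivity (p n * gamma i * mu i (n i) * r (ext i) (ext j) * gamma j); last ring.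
by rewrite product_form_down // r_rev; ring.
Qed.

Lemma product_form_balance n :
  (\esum_(m in [set m | m != n]) (p m * rate lam mu r gamma m n)%:E
   = \esum_(m in [set m | m != n]) (p n * rate lam mu r gamma n m)%:E)%E.
Proof.
under eq_esum do rewrite product_form_flow_in.
under [RHS]eq_esum do rewrite product_form_flow_out.
rewrite !esum_rate_pointmasses; first last.
all: try by move=> *; apply: mulr_ge0; [exact: product_form_ge0|];
  repeat apply: mulr_ge0; rewrite ?r_ge0 ?gamma_ge0 //; apply: ltW; apply: mu_gt0.
all: try by move=> i _ /=; apply: up_neq.
all: try by move=> i ni /=; apply: down_neq.
all: try by move=> j i ij _ /=; apply: up_down_neq.
all: try by move=> j i ij _ /=; apply: up_down_neq; rewrite eq_sym.
congr (_%:E).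
rewrite balance_external_departures balance_internal_routing balance_external_arrivals.
ring.
Qed.

Lemma product_form_stationary :
  (\esum_(n in [set: state J]) (p n)%:E = 1)%E -> stationary (rate lam mu r gamma) p.
Proof. by split; [exact: product_form_ge0 | | exact: product_form_balance]. Qed.

End ProductFormBalance.

Arguments product_form {R J}.

Lemma fsbig_setT_finType (R : realType) (T : finType) (F : T -> \bar R) :
  (\sum_(x \in [set: T]) F x = \sum_(x : T) F x)%E.
Proof.
rewrite fsbig_finite; last exact: finite_finset.
rewrite (perm_big (enum T)); first by rewrite big_enum.
apply: uniq_perm; rewrite ?enum_uniq //; first exact: finmap.fset_uniq.
by move=> x; rewrite in_fset_set ?mem_enum; [exact: mem_set | exact: finite_finset].
Qed.

Lemma esumZl (R : realType) (T : choiceType) (A : set T) (k : R) (f : T -> \bar R) :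
  0 <= k -> (forall x, A x -> 0 <= f x)%E ->
  (\esum_(x in A) (k%:E * f x) = k%:E * \esum_(x in A) f x)%E.
Proof.
have le (k' : R) (g : T -> \bar R) : 0 <= k' -> (forall x, A x -> 0 <= g x)%E ->
    (\esum_(x in A) (k'%:E * g x) <= k'%:E * \esum_(x in A) g x)%E.
  move=> k'_ge0 g_ge0; apply: ge_ereal_sup => _ [X [finX XA] <-].
  rewrite fsbig_finite // big_seq -ge0_sume_distrr; last first.
    by move=> x; rewrite in_fset_set // inE => /XA /g_ge0.
  apply: lee_wpmul2l; first by rewrite lee_fin.
  by rewrite -big_seq -fsbig_finite //; apply: ereal_sup_ubound; exists X.
move=> k_ge0 f_ge0; apply/eqP; rewrite eq_le le //=.
have [->|k_neq0] := eqVneq k 0; first by rewrite mul0e esum_ge0 // => x _; rewrite mul0e.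
have kV_ge0 : 0 <= k^-1 by rewrite invr_ge0.
have f_le : (\esum_(x in A) f x <= (k^-1)%:E * \esum_(x in A) (k%:E * f x))%E.
  apply: le_trans (le _ _ kV_ge0 _) => [|x Ax]; last by rewrite mule_ge0 ?lee_fin ?f_ge0.
  by under [X in (_ <= X)%E]eq_esum do rewrite muleA -EFinM mulVf // mul1e.
have := lee_wpmul2l (k_ge0 : (0 <= k%:E)%E) f_le.
by rewrite muleA -EFinM mulfV // mul1e.
Qed.

Section EsumProductSeries.
Variables (R : realType) (I : finType) (a : I -> nat -> R) (s : I -> R).
Hypothesis a_ge0 : forall i k, 0 <= a i k.
Hypothesis a_series : forall i, series (a i) @ \oo --> s i.

Let box N (g : {ffun I -> 'I_N.+1}) : {ffun I -> nat} := [ffun i => nat_of_ord (g i)].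

Let box_inj N : injective (@box N).
Proof.
move=> g1 g2 /ffunP eq12; apply/ffunP => i; apply/val_inj.
by have := eq12 i; rewrite !ffunE.
Qed.

Let fsum_box N :
  (\sum_(w \in range (@box N)) (\prod_i a i (w i))%:E = (\prod_i series (a i) N.+1)%:E)%E.
Proof.
rewrite fsbig_image; last by move=> x y _ _; apply: box_inj.
rewrite fsbig_setT_finType sumEFin /series /=; congr (_%:E).
under [RHS]eq_bigr do rewrite big_mkord.
by rewrite bigA_distr_bigA /=; apply: eq_bigr => g _; apply: eq_bigr => i _; rewrite ffunE.
Qed.

Let series_ge0 i N : 0 <= series (a i) N.
Proof. by apply: sumr_ge0 => k _. Qed.

Let series_le_lim i N : series (a i) N <= s i.
Proof.
rewrite -(cvg_lim (@Rhausdorff R) (a_series i)).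
apply: nondecreasing_cvgn_le; last by apply/cvg_ex; exists (s i).
by apply: nondecreasing_series => k _ _.
Qed.

Lemma esum_ffun_prod :
  (\esum_(w in [set: {ffun I -> nat}]) (\prod_i a i (w i))%:E = (\prod_i s i)%:E)%E.
Proof.
set E := esum _ _.
have E_le : (E <= (\prod_i s i)%:E)%E.
  apply: ge_ereal_sup => _ [X [finX _] <-].
  have [B XB] := finite_fsetP.1 finX.
  pose N := (\max_(w <- finmap.enum_fset B) \max_i w i)%N.
  have X_box : X `<=` range (@box N).
    move=> w; rewrite XB /= => wB.
    exists [ffun i => inord (w i)] => //; apply/ffunP => i; rewrite !ffunE inordK //.
    rewrite ltnS; apply: (@leq_trans (\max_i w i)); first exact: leq_bigmax.
    exact: (@leq_bigmax_seq _ _ _ (fun w : {ffun I -> nat} => \max_i w i)).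
  apply: (@le_trans _ _ (\sum_(w \in range (@box N)) (\prod_i a i (w i))%:E)%E).
    apply: lee_fsum_nneg_subset => //.
    - exact: finite_image finite_finset.
    - by move=> w /[!inE] /X_box.
    - by move=> w _; rewrite lee_fin prodr_ge0.
  by rewrite fsum_box lee_fin; apply: ler_prod => i _; rewrite series_ge0 series_le_lim.
have le_E N : ((\prod_i series (a i) N.+1)%:E <= E)%E.
  rewrite -fsum_box; apply: esum_ge; exists (range (@box N)) => //.
  by split => //; exact: finite_image finite_finset.
have E_fin : E \is a fin_num.
  rewrite ge0_fin_numE ?(le_lt_trans E_le) ?ltry //.
  by apply: esum_ge0 => w _; rewrite lee_fin prodr_ge0.
apply/eqP; rewrite eq_le E_le /= -(fineK E_fin) lee_fin.
have cvg_prod : (fun N => \prod_i series (a i) N.+1) @ \oo --> \prod_i s i.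
  by apply: cvg_big => [|i _]; [exact: mul_continuous | rewrite (cvg_shiftS (series (a i)))].
rewrite -(cvg_lim (@Rhausdorff R) cvg_prod); apply: limr_le.
  by apply/cvg_ex; eexists; exact: cvg_prod.
by apply: nearW => N; rewrite -lee_fin (fineK E_fin).
Qed.

End EsumProductSeries.

Section BlockedWorkingSplit.
Variables (R : realType) (J : nat) (gamma : 'I_J -> R).

Definition working : {pred 'I_J} := [pred j | gamma j != 0].
Definition Wnode := {j : 'I_J | j \in working}.
Definition Wconf := {ffun Wnode -> nat}.

Definition merge (cw : Bconf gamma * Wconf) : state J :=
  [ffun j => if insub j is Some k then cw.1 k
             else if insub j is Some k then cw.2 k else 0%N].

Lemma merge_bij : bijective merge.
Proof.
exists (fun n => (restrB gamma n, [ffun k : Wnode => n (val k)])).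
  move=> [c w] /=; congr (_, _); apply/ffunP => k; rewrite !ffunE ?valK //.
  by rewrite insubN ?valK //; have := valP k; rewrite inE.
move=> n; apply/ffunP => j; rewrite !ffunE /=.
case: insubP => [k _ <-|notB]; first by rewrite ffunE.
case: insubP => [k _ <-|]; first by rewrite ffunE.
by rewrite inE notB.
Qed.

Lemma restrB_merge cw : restrB gamma (merge cw) = cw.1.
Proof. by apply/ffunP => k; rewrite !ffunE valK. Qed.

Lemma merge_working cw (k : Wnode) : merge cw (val k) = cw.2 k.
Proof. by rewrite ffunE insubN ?valK //; have := valP k; rewrite inE. Qed.

End BlockedWorkingSplit.

Arguments merge {R J gamma}.
Arguments Wnode {R J}.
Arguments Wconf {R J}.
Arguments working {R J}.

Section Marginals.
Variables (R : realType) (J : nat) (eta : 'I_J.+1 -> R) (mu : 'I_J -> nat -> R).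
Hypothesis eta_gt0 : forall b, 0 < eta b.
Hypothesis mu_gt0 : forall j k, (0 < k)%N -> 0 < mu j k.
Hypothesis pterm_summable : forall j, cvgn (series (pterm eta mu j)).

Lemma pterm_ge0 j k : 0 <= pterm eta mu j k.
Proof.
rewrite /pterm big_nat_cond; apply: prodr_ge0 => i /andP[/andP[i_gt0 _] _].
by rewrite divr_ge0 // ltW ?eta_gt0 ?mu_gt0.
Qed.

Lemma pterm0 j : pterm eta mu j 0 = 1.
Proof. by rewrite /pterm big_geq. Qed.

Lemma pterm_rec j k : pterm eta mu j k.+1 * mu j k.+1 = pterm eta mu j k * eta (ext j).
Proof. by rewrite /pterm big_nat_recr //= -!mulrA mulVf ?mulr1 // gt_eqF ?mu_gt0. Qed.

Lemma Cnorm_gt0 j : 0 < Cnorm eta mu j.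
Proof.
apply: lt_le_trans ltr01 _; rewrite /Cnorm.
have := nondecreasing_cvgn_le _ (pterm_summable j) 1.
rewrite /series /= big_nat1 pterm0; apply.
by apply: nondecreasing_series => k _ _; exact: pterm_ge0.
Qed.

Definition marginal j k := pterm eta mu j k / Cnorm eta mu j.

Lemma marginal_ge0 j k : 0 <= marginal j k.
Proof. by rewrite divr_ge0 ?pterm_ge0 // ltW // Cnorm_gt0. Qed.

Lemma marginal_rec j k : marginal j k.+1 * mu j k.+1 = marginal j k * eta (ext j).
Proof. by rewrite /marginal mulrAC pterm_rec mulrAC. Qed.

Lemma marginal_series j : series (marginal j) @ \oo --> (1 : R).
Proof.
have -> : series (marginal j) = (fun N => series (pterm eta mu j) N * (Cnorm eta mu j)^-1).
  by apply/funext => N; rewrite /series /= mulr_suml.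
rewrite -(mulfV (lt0r_neq0 (Cnorm_gt0 j))).
exact: cvgM (pterm_summable j) (cvg_cst _).
Qed.

Lemma esum_xi : (\esum_(n in [set: state J]) (xi eta mu n)%:E = 1)%E.
Proof.
have := @esum_ffun_prod R _ _ (fun=> 1) marginal_ge0 marginal_series.
by rewrite big1_eq.
Qed.

Lemma esum_xi_phi (gamma : 'I_J -> R) (phi : Bconf gamma -> R) :
  (forall c, 0 <= phi c) -> (\esum_(c in [set: Bconf gamma]) (phi c)%:E = 1)%E ->
  (\esum_(n in [set: state J]) (xi_phi eta mu phi n)%:E = 1)%E.
Proof.
move=> phi_ge0 phi1.
rewrite (reindex_esum [set: Bconf gamma * Wconf gamma] _ (@merge R J gamma)); last first.
  by rewrite setTT_bijective; exact: merge_bij.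
rewrite -setXTT -(@esum_esum R _ _ [set: Bconf gamma] (fun=> [set: Wconf gamma])
  (fun c w => (xi_phi eta mu phi (merge (c, w)))%:E)); last first.
  by move=> c w _ _; rewrite lee_fin mulr_ge0 // prodr_ge0 // => j _; exact: marginal_ge0.
rewrite -phi1; apply: eq_esum => c _.
have xi_phi_merge w : xi_phi eta mu phi (merge (c, w)) =
    phi c * \prod_(k : Wnode gamma) marginal (val k) (w k).
  rewrite /xi_phi restrB_merge mulrC; congr (_ * _).
  rewrite [RHS](eq_bigr (fun k => marginal (val k) (merge (c, w) (val k)))) => [|k _].
    by rewrite -(big_sub (working gamma) (fun j => marginal j (merge (c, w) j))).
  by rewrite merge_working.
under eq_esum do rewrite xi_phi_merge EFinM.
rewrite esumZl // => [|w _]; last by rewrite lee_fin prodr_ge0 // => k _; exact: marginal_ge0.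
have := @esum_ffun_prod R (Wnode gamma) (fun k => marginal (val k)) (fun=> 1)
  (fun k => marginal_ge0 (val k)) (fun k => marginal_series (val k)).
by rewrite big1_eq => ->; rewrite mule1.
Qed.

End Marginals.

Arguments marginal {R J}.

Section RateComparison.
Variables (R : realType) (J : nat) (lam : R) (mu : 'I_J -> nat -> R)
  (r : 'I_J.+1 -> 'I_J.+1 -> R) (gamma : 'I_J -> R).
Hypothesis r_ge0 : forall a b, 0 <= r a b.
Hypothesis lam_ge0 : 0 <= lam.
Hypothesis mu_gt0 : forall j k, (0 < k)%N -> 0 < mu j k.
Hypothesis gamma01 : forall j, 0 <= gamma j <= 1.

Let gamma_ge0 j : 0 <= gamma j. Proof. by case/andP: (gamma01 j). Qed.
Let c := \prod_j gamma j.

Let c_ge0 : 0 <= c. Proof. exact: prodr_ge0. Qed.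

Let c_le j : c <= gamma j.
Proof.
rewrite /c (bigD1 j) //= ler_piMr //.
by apply: prodr_ile1 => i _; exact: gamma01.
Qed.

Let c2_le j : c * c <= gamma j.
Proof.
apply: le_trans (c_le j); rewrite ler_piMl // (le_trans (c_le j)) //.
by case/andP: (gamma01 j).
Qed.

Lemma rate_ge_prod_gamma (n m : state J) :
  (\prod_j gamma j) ^+ 2 * rate lam mu r (fun=> 1) n m <= rate lam mu r gamma n m.
Proof.
rewrite -/c expr2 /rate !mulrDr !mulr_sumr; apply: lerD; first apply: lerD.
- apply: ler_sum => i _; case: ifP => _; rewrite ?mulr0 // !ralpha_source.
  by rewrite mulrCA ler_wpM2l ?mulr_ge0 // mulr1 mulrC ler_wpM2l.
- apply: ler_sum => j _; rewrite mulr_sumr; apply: ler_sum => i ij.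
  case: ifP => [/andP[nj _]|_]; rewrite ?mulr0 // !ralpha_ext //.
  have mu_ge0 : 0 <= mu j (n j) by rewrite ltW ?mu_gt0.
  have : c * c <= gamma j * gamma i by rewrite ler_pM.
  have := r_ge0 (ext j) (ext i); have : 0 <= mu j (n j) * r (ext j) (ext i) by rewrite mulr_ge0.
  nra.
- apply: ler_sum => j _; case: ifP => [/andP[nj _]|_]; rewrite ?mulr0 // !ralpha_sink.
  have : 0 <= mu j (n j) * r (ext j) ord0 by rewrite mulr_ge0 // ltW ?mu_gt0.
  have := c2_le j; nra.
Qed.

End RateComparison.

Arguments rate_ge_prod_gamma {R J lam mu r gamma}.

Lemma rate_frozen {R : realType} {J : nat} {lam : R} {mu : 'I_J -> nat -> R}
    {r : 'I_J.+1 -> 'I_J.+1 -> R} {gamma : 'I_J -> R} {n m : state J} :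
  0 < rate lam mu r gamma n m -> forall j, gamma j == 0 -> m j = n j.
Proof.
move=> rate_gt0 j /eqP gj; apply/eqP; apply: contraLR rate_gt0 => mj.
rewrite -leNgt /rate !big1 ?addr0 // => [j' _|j' _|i _].
- case: ifP => [/andP[_ /eqP m_down]|_] //.
  case: (eqVneq j' j) => [->|j'j]; first by rewrite gj !mul0r.
  by move: mj; rewrite m_down downE (eq_sym j j') (negPf j'j) eqxx.
- apply: big1 => i ij'; case: ifP => [/andP[_ /eqP m_move]|_] //.
  case: (eqVneq j' j) => [->|j'j]; first by rewrite gj !mul0r.
  case: (eqVneq i j) => [ij|ij]; first by rewrite ralpha_ext // ij gj !mulr0.
  by move: mj; rewrite m_move upE downE (eq_sym j i) (negPf ij) (eq_sym j j') (negPf j'j) eqxx.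
- case: eqP => // m_up; rewrite ralpha_source.
  case: (eqVneq i j) => [->|ij]; first by rewrite gj !mulr0.
  by move: mj; rewrite m_up upE (eq_sym j i) (negPf ij) eqxx.
Qed.

Lemma rate_gt0_transfer (R : realType) (J : nat) (lam : R) (mu : 'I_J -> nat -> R)
    (r : 'I_J.+1 -> 'I_J.+1 -> R) (gamma : 'I_J -> R) (n m : state J) :
  (forall a b, 0 <= r a b) -> 0 <= lam -> (forall j k, (0 < k)%N -> 0 < mu j k) ->
  (forall j, 0 < gamma j <= 1) ->
  0 < rate lam mu r (fun=> 1) n m -> 0 < rate lam mu r gamma n m.
Proof.
move=> r_ge0 lam_ge0 mu_gt0 gamma01 rate1_gt0.
have gamma01' j : 0 <= gamma j <= 1 by case/andP: (gamma01 j) => /ltW -> ->.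
apply: lt_le_trans (rate_ge_prod_gamma r_ge0 lam_ge0 mu_gt0 gamma01' n m).
by rewrite mulr_gt0 // exprn_gt0 // prodr_gt0 // => j _; case/andP: (gamma01 j).
Qed.

Lemma path_frozen {R : realType} {J : nat} {lam : R} {mu : 'I_J -> nat -> R}
    {r : 'I_J.+1 -> 'I_J.+1 -> R} {gamma : 'I_J -> R} {j : 'I_J}
    {x : state J} {s : seq (state J)} :
  gamma j == 0 -> path (fun a b => 0 < rate lam mu r gamma a b) x s -> last x s j = x j.
Proof.
move=> gj; elim: s x => [|y s IH] x //= /andP[xy y_path].
by rewrite IH // (rate_frozen xy).
Qed.

Lemma blocked_not_irreducible (R : realType) (J : nat) (lam : R) (mu : 'I_J -> nat -> R)
    (r : 'I_J.+1 -> 'I_J.+1 -> R) (gamma : 'I_J -> R) (j : 'I_J) :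
  gamma j == 0 -> ~ irreducible (rate lam mu r gamma).
Proof.
move=> gj irr; have [s /andP[s_path /eqP s_last]] := irr [ffun=> 0%N] (up [ffun=> 0%N] j).
by have := path_frozen gj s_path; rewrite s_last upE eqxx !ffunE.
Qed.

Lemma irreducible_transfer (R : realType) (J : nat) (lam : R) (mu : 'I_J -> nat -> R)
    (r : 'I_J.+1 -> 'I_J.+1 -> R) (gamma : 'I_J -> R) :
  (forall a b, 0 <= r a b) -> 0 <= lam -> (forall j k, (0 < k)%N -> 0 < mu j k) ->
  (forall j, 0 < gamma j <= 1) ->
  irreducible (rate lam mu r (fun=> 1)) -> irreducible (rate lam mu r gamma).
Proof.
move=> r_ge0 lam_ge0 mu_gt0 gamma01 irr n m.
have [s /andP[s_path s_last]] := irr n m; exists s; rewrite s_last andbT.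
by apply: sub_path s_path => x y; exact: rate_gt0_transfer.
Qed.

Lemma xi_product_form {R : realType} {J : nat} (eta : 'I_J.+1 -> R) (mu : 'I_J -> nat -> R)
    (gamma : 'I_J -> R) :
  xi eta mu = product_form gamma (marginal eta mu)
                (fun n => \prod_(j | gamma j == 0) marginal eta mu j (n j)).
Proof.
apply/funext => n; rewrite /xi /product_form (bigID (fun j => gamma j != 0)) /=.
by congr (_ * _); apply: eq_bigl => j; rewrite negbK.
Qed.

Section Stationarity.
Variables (R : realType) (J : nat) (lam : R) (r : 'I_J.+1 -> 'I_J.+1 -> R)
  (eta : 'I_J.+1 -> R) (mu : 'I_J -> nat -> R) (gamma : 'I_J -> R).
Hypothesis r_ge0 : forall a b, 0 <= r a b.
Hypothesis lam_ge0 : 0 <= lam.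
Hypothesis eta_ord0 : eta ord0 = lam.
Hypothesis r_rev : forall a b, eta a * r a b = eta b * r b a.
Hypothesis eta_gt0 : forall b, 0 < eta b.
Hypothesis mu_gt0 : forall j k, (0 < k)%N -> 0 < mu j k.
Hypothesis pterm_summable : forall j, cvgn (series (pterm eta mu j)).
Hypothesis gamma_ge0 : forall j, 0 <= gamma j.

Lemma marginal_product_stationary (h : state J -> R) : (forall n, 0 <= h n) ->
  (forall n m : state J, (forall j, gamma j == 0 -> m j = n j) -> h m = h n) ->
  (\esum_(n in [set: state J]) (product_form gamma (marginal eta mu) h n)%:E = 1)%E ->
  stationary (rate lam mu r gamma) (product_form gamma (marginal eta mu) h).
Proof.
move=> h_ge0 h_frozen; apply: product_form_stationary => //.
- exact: eta_ord0.
- exact: marginal_ge0.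
- exact: marginal_rec.
Qed.

Lemma xi_stationary : stationary (rate lam mu r gamma) (xi eta mu).
Proof.
rewrite (xi_product_form eta mu gamma); apply: marginal_product_stationary.
- by move=> n; apply: prodr_ge0 => j _; exact: marginal_ge0.
- by move=> n m frozen; apply: eq_bigr => j /frozen ->.
- by rewrite -xi_product_form esum_xi.
Qed.

Lemma xi_phi_stationary (phi : Bconf gamma -> R) :
  (forall c, 0 <= phi c) -> (\esum_(c in [set: Bconf gamma]) (phi c)%:E = 1)%E ->
  stationary (rate lam mu r gamma) (xi_phi eta mu phi).
Proof.
move=> phi_ge0 phi1; apply: marginal_product_stationary; rewrite ?esum_xi_phi // => n m frozen.
by congr phi; apply/ffunP => k; rewrite !ffunE frozen //; exact: (valP k).
Qed.

End Stationarity.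

Arguments xi_stationary {R J lam r eta mu gamma}.
Arguments xi_phi_stationary {R J lam r eta mu gamma}.

Theorem theorem3p4 (R : realType) (J : nat) (lamj : 'I_J -> R) (lam : R)
    (r : 'I_J.+1 -> 'I_J.+1 -> R) (eta : 'I_J.+1 -> R) (mu : 'I_J -> nat -> R)
    (gamma : 'I_J -> R) :
  (forall j, 0 <= lamj j) ->
  lam = \sum_(j : 'I_J) lamj j -> 0 < lam ->
  (forall a b, 0 <= r a b) ->
  (forall a, \sum_(b : 'I_J.+1) r a b = 1) ->
  (forall a b, connect (fun a b => 0 < r a b) a b) ->
  r ord0 ord0 = 0 ->
  (forall j, r ord0 (ext j) = lamj j / lam) ->
  eta ord0 = lam ->
  (forall b, eta b = \sum_(a : 'I_J.+1) eta a * r a b) ->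
  (forall a b, eta a * r a b = eta b * r b a) ->
  (forall j k, (0 < k)%N -> 0 < mu j k) ->
  (forall j, cvgn (series (pterm eta mu j))) ->
  ergodic (rate lam mu r (fun _ => 1)) ->
  (forall j, 0 <= gamma j <= 1) ->
  [/\ stationary (rate lam mu r gamma) (xi eta mu),
      (forall j, gamma j != 0) -> ergodic (rate lam mu r gamma) &
      (exists j, gamma j == 0) ->
        [/\ ~ irreducible (rate lam mu r gamma),
            (forall n m : state J, 0 < rate lam mu r gamma n m ->
               forall j, gamma j == 0 -> m j = n j) &
            forall phi : Bconf gamma -> R,
              (forall c, 0 <= phi c) ->
              (\esum_(c in [set: Bconf gamma]) (phi c)%:E = 1)%E ->
              stationary (rate lam mu r gamma) (xi_phi eta mu phi)]].
Proof.
move=> _ _ lam_gt0 r_ge0 _ r_conn _ _ eta_ord0 _ r_rev mu_gt0 summable ergodic1 gamma01.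
have eta_gt0 : forall b, 0 < eta b.
  by apply: (reversible_gt0 (i0 := ord0)) => //; rewrite eta_ord0.
have lam_ge0 := ltW lam_gt0.
have gamma_ge0 j : 0 <= gamma j by case/andP: (gamma01 j).
have xi_st := xi_stationary r_ge0 lam_ge0 eta_ord0 r_rev eta_gt0 mu_gt0 summable gamma_ge0.
split=> // [gamma_gt0|[j gj]].
- split; last by exists (xi eta mu).
  apply: irreducible_transfer ergodic1.1 => // i.
  by rewrite lt_def gamma_gt0 gamma01.
- split; first exact: blocked_not_irreducible gj.
  + by move=> n m; exact: rate_frozen.
  + exact: (xi_phi_stationary r_ge0 lam_ge0 eta_ord0 r_rev eta_gt0 mu_gt0 summable gamma_ge0).
Qed.
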